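(* Let $\mathcal{S}$ be a set of LU-theories in a common predicate language $\Sigma$, any two of which are language similar. Then the relation $\sqsubseteq^L$ is a partial order on $\mathcal{S}$.
   Context: Theories are complete theories in predicate (relational) languages. A predicate symbol $R$ is non-empty for $T$ if $T\vdash\exists\bar x R(\bar x)$. A theory $T$ in a predicate language $\Sigma$ is language uniform (an LU-theory) if for each arity $n$, every permutation of the set of $n$-ary symbols that are non-empty for $T$ preserves $T$ (i.e., replacing each such symbol by its image maps $T$ onto $T$). Theories $T_0,T_1$ in languages $\Sigma_0,\Sigma_1$ are language similar if $T_0$ can be obtained from $T_1$ by a bijective (arity-preserving) replacement of the symbols of $\Sigma_1$ by the symbols of $\Sigma_0$. For language similar theories $T_1,T_2$ of the same language $\Sigma$, $T_1\sqsubseteq^L T_2$ means: for every $R\in\Sigma$, if $T_1\vdash\exists\bar x R(\bar x)$ then $T_2\vdash\exists\bar x R(\bar x)$. *)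

From mathcomp Require Import all_boot.
Set Implicit Arguments.
Unset Strict Implicit.
Unset Printing Implicit Defensive.

Section FOL.
Variable sym : Type.
Variable ar : sym -> nat.

(* Formulas of the relational language, variables as de Bruijn indices. *)
Inductive form : Type :=
| Fal : form
| Eq : nat -> nat -> form
| Rel : sym -> seq nat -> form
| Imp : form -> form -> form
| All : form -> form.

Definition Neg (f : form) : form := Imp f Fal.
Definition Ex (f : form) : form := Neg (All (Neg f)).

Fixpoint wf (f : form) : Prop :=
  match f with
  | Fal => True
  | Eq _ _ => True
  | Rel R a => size a = ar R
  | Imp f g => wf f /\ wf g
  | All f => wf f
  end.

Fixpoint closed_at (k : nat) (f : form) : bool :=
  match f with
  | Fal => true
  | Eq i j => (i < k) && (j < k)
  | Rel _ a => all (fun i => i < k) a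
  | Imp f g => closed_at k f && closed_at k g
  | All f => closed_at k.+1 f
  end.

Definition sentence (f : form) : Prop := wf f /\ closed_at 0 f.

Record structure : Type := Structure {
  dom : Type;
  dom_inh : dom;
  rel : sym -> seq dom -> Prop }.

Definition scons (D : Type) (d : D) (rho : nat -> D) (n : nat) : D :=
  match n with 0 => d | k.+1 => rho k end.

Fixpoint sat (M : structure) (rho : nat -> dom M) (f : form) : Prop :=
  match f with
  | Fal => False
  | Eq i j => rho i = rho j
  | Rel R a => @rel M R (map rho a)
  | Imp f g => sat rho f -> sat rho g
  | All f => forall d : dom M, sat (scons d rho) f
  end.

Definition theory_set := form -> Prop.

(* T |- f  (semantic consequence; equivalent to derivability by Goedel's
   completeness theorem) *)
Definition entails (T : theory_set) (f : form) : Prop :=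
  forall (M : structure) (rho : nat -> dom M),
    (forall g, T g -> sat rho g) -> sat rho f.

Definition is_theory (T : theory_set) : Prop :=
  (forall f, T f -> sentence f) /\
  (forall f, sentence f -> entails T f -> T f).

Definition complete_theory (T : theory_set) : Prop :=
  [/\ is_theory T, ~ T Fal & forall f, sentence f -> T f \/ T (Neg f)].

Definition theory_eq (T1 T2 : theory_set) : Prop := forall f, T1 f <-> T2 f.

Definition exs (n : nat) (f : form) : form := iter n Ex f.
Definition ex_rel (R : sym) : form := exs (ar R) (Rel R (iota 0 (ar R))).

Definition nonempty_sym (T : theory_set) (R : sym) : Prop := entails T (ex_rel R).

Fixpoint rename (s : sym -> sym) (f : form) : form :=
  match f with
  | Fal => Fal
  | Eq i j => Eq i j
  | Rel R a => Rel (s R) a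
  | Imp f g => Imp (rename s f) (rename s g)
  | All f => All (rename s f)
  end.

Definition rename_theory (s : sym -> sym) (T : theory_set) : theory_set :=
  fun g => exists f, T f /\ g = rename s f.

Definition preserves (s : sym -> sym) (T : theory_set) : Prop :=
  theory_eq (rename_theory s T) T.

Definition arity_bijection (s : sym -> sym) : Prop :=
  bijective s /\ forall R, ar (s R) = ar R.

(* LU-theory: for each arity n, every permutation of the set of n-ary
   symbols non-empty for T (extended by the identity to the other symbols)
   preserves T. *)
Definition LU_theory (T : theory_set) : Prop :=
  forall (n : nat) (p : sym -> sym),
    bijective p ->
    (forall R, ar R = n /\ nonempty_sym T R ->
               ar (p R) = n /\ nonempty_sym T (p R)) ->
    (forall R, ~ (ar R = n /\ nonempty_sym T R) -> p R = R) ->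
    preserves p T.

Definition language_similar (T0 T1 : theory_set) : Prop :=
  exists s, arity_bijection s /\ theory_eq (rename_theory s T1) T0.

Definition sqsubL (T1 T2 : theory_set) : Prop :=
  forall R, nonempty_sym T1 R -> nonempty_sym T2 R.

End FOL.

(** Let [T1 = s(T2)] for an arity-preserving bijection [s], with [T1] and
    [T2] having the same non-empty symbols [N]. Then [s] permutes [N]
    arity by arity, and since [T2] is LU, every restriction of [s] to the
    [n]-ary symbols of [N] preserves [T2]; composing finitely many of them
    shows that [T2] is closed under the restriction of [s] to the symbols
    of [N] of arity [< k], for every [k]. A sentence only mentions symbols
    of bounded arity, and on the symbols outside [N] (interpreted as empty
    relations in every model of the complete theory [T2]) renaming by [s]
    or leaving them alone makes no difference. Hence [T2] is closed under
    [s], i.e. [T1 ⊆ T2], and completeness of [T1] gives [T1 = T2]. *)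

From Pilot Require Import Defs.
From Stdlib Require Import ClassicalEpsilon FunctionalExtensionality.
From mathcomp Require Import all_boot.

Set Implicit Arguments.
Unset Strict Implicit.
Unset Printing Implicit Defensive.

Section Syntax.
Variables (sym : Type) (ar : sym -> nat).
Implicit Types (s si : sym -> sym) (g : form sym).

Lemma rename_ext (f1 f2 : sym -> sym) g : f1 =1 f2 -> rename f1 g = rename f2 g.
Proof. by move=> E; elim: g => //= [R a|f IHf h IHh|f IHf]; rewrite ?E ?IHf ?IHh. Qed.

Lemma rename_comp (f1 f2 : sym -> sym) g : rename f1 (rename f2 g) = rename (f1 \o f2) g.
Proof. by elim: g => //= [f IHf h IHh|f IHf]; rewrite ?IHf ?IHh. Qed.

Lemma rename_id g : rename id g = g.
Proof. by elim: g => //= [f IHf h IHh|f IHf]; rewrite ?IHf ?IHh. Qed.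

Lemma rename_cancel s si g : cancel s si -> rename si (rename s g) = g.
Proof. by move=> sK; rewrite rename_comp -[RHS]rename_id; apply: rename_ext. Qed.

Lemma rename_wf s g : (forall R, ar (s R) = ar R) -> wf ar g -> wf ar (rename s g).
Proof.
move=> ar_s; elim: g => //= [R a|f IHf h IHh [wf_f wf_h]]; first by rewrite ar_s.
by split; [apply: IHf | apply: IHh].
Qed.

Lemma rename_closed_at s g k : closed_at k (rename s g) = closed_at k g.
Proof. by elim: g k => //= f IHf h IHh k; rewrite IHf IHh. Qed.

Lemma rename_sentence s g :
  (forall R, ar (s R) = ar R) -> sentence ar g -> sentence ar (rename s g).
Proof. by move=> ar_s [wf_g cl_g]; split; [apply: rename_wf | rewrite rename_closed_at]. Qed.

Lemma wf_exs n g : wf ar g -> wf ar (exs n g).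
Proof. by elim: n => //= n IH wf_g; split=> //; split=> //; apply: IH. Qed.

Lemma closed_at_exs n g k : closed_at k (exs n g) = closed_at (n + k) g.
Proof. by elim: n k => //= n IH k; rewrite /Ex /Neg /= IH addnS !andbT. Qed.

Lemma sentence_ex_rel R : sentence ar (ex_rel ar R).
Proof.
split; first by apply: wf_exs; rewrite /= size_iota.
by rewrite /ex_rel closed_at_exs addn0 /=; apply/allP => i; rewrite mem_iota.
Qed.

Lemma rename_ex_rel s R : ar (s R) = ar R -> rename s (ex_rel ar R) = ex_rel ar (s R).
Proof.
move=> ar_sR; rewrite /ex_rel ar_sR; set a := iota 0 (ar R).
by elim: (ar R) => //= n ->.
Qed.

Fixpoint all_syms (P : sym -> Prop) g : Prop :=
  match g with
  | Rel R _ => P R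
  | Imp f h => all_syms P f /\ all_syms P h
  | All f => all_syms P f
  | _ => True
  end.

Lemma all_syms_mono (P Q : sym -> Prop) g :
  (forall R, P R -> Q R) -> all_syms P g -> all_syms Q g.
Proof.
move=> PQ; elim: g => //= [R _|f IHf h IHh [Pf Ph]]; first exact: PQ.
by split; [apply: IHf | apply: IHh].
Qed.

Fixpoint arity_bound g : nat :=
  match g with
  | Rel R _ => (ar R).+1
  | Imp f h => maxn (arity_bound f) (arity_bound h)
  | All f => arity_bound f
  | _ => 0
  end.

Lemma all_syms_arity_bound g : all_syms (fun R => ar R < arity_bound g) g.
Proof.
elim: g => //= f IHf h IHh; split.
- by apply: all_syms_mono IHf => R /leq_trans; apply; rewrite leq_maxl.
- by apply: all_syms_mono IHh => R /leq_trans; apply; rewrite leq_maxr.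
Qed.

End Syntax.

Section Semantics.
Variables (sym : Type) (ar : sym -> nat) (M : structure sym).

Lemma sat_exs n g (rho sigma : nat -> dom M) :
  (forall i, n <= i -> sigma i = rho (i - n)) -> sat sigma g -> sat rho (exs n g).
Proof.
elim: n rho sigma => [|n IH] rho sigma sigmaE sat_g /=.
  suff -> : rho = sigma by [].
  by apply: functional_extensionality => i; rewrite sigmaE // subn0.
move=> no_witness; apply: (no_witness (sigma n)); apply: (IH _ sigma) => // i le_ni.
case: (ltngtP n i) => [lt_ni | lt_in | <-]; last by rewrite subnn.
- by rewrite sigmaE // subnS; case: (i - n) (subn_gt0 n i) lt_ni => [|k] <-.
- by rewrite leqNgt lt_in in le_ni.
Qed.

Lemma sat_ex_rel (rho : nat -> dom M) R (l : seq (dom M)) :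
  size l = ar R -> @Defs.rel _ M R l -> sat rho (ex_rel ar R).
Proof.
move=> size_l Rl.
pose sigma i := if i < ar R then nth (dom_inh M) l i else rho (i - ar R).
apply: (@sat_exs (ar R) _ rho sigma) => [i|/=]; first by rewrite /sigma ltnNge => ->.
suff -> : map sigma (iota 0 (ar R)) = l by [].
rewrite -[RHS](mkseq_nth (dom_inh M) l) /mkseq size_l.
by apply/eq_in_map => i; rewrite mem_iota add0n /sigma => /= ->.
Qed.

Lemma sat_rename_congr (f1 f2 : sym -> sym) (g : form sym) :
  wf ar g ->
  all_syms (fun R => forall l, size l = ar R ->
                      @Defs.rel _ M (f1 R) l <-> @Defs.rel _ M (f2 R) l) g ->
  forall rho : nat -> dom M, sat rho (rename f1 g) <-> sat rho (rename f2 g).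
Proof.
elim: g => //= [R a size_a E|f IHf h IHh [wf_f wf_h] [Ef Eh]|f IHf wf_f Ef] rho.
- by apply: E; rewrite size_map.
- by move: (IHf wf_f Ef rho) (IHh wf_h Eh rho); tauto.
- by split=> sat_f d; apply/(IHf wf_f Ef); apply: sat_f.
Qed.

End Semantics.

Section Theories.
Variables (sym : Type) (ar : sym -> nat).
Implicit Types (T : theory_set sym) (f : form sym).

Lemma theory_entails T f : is_theory ar T -> sentence ar f -> entails T f <-> T f.
Proof. by case=> _ T_closed sf; split; [apply: T_closed | move=> Tf M rho; apply]. Qed.

Lemma nonempty_symE T R : is_theory ar T -> nonempty_sym ar T R <-> T (ex_rel ar R).
Proof. by move=> thT; apply: theory_entails (sentence_ex_rel ar R). Qed.

Lemma complete_empty_rel T R (M : structure sym) (rho : nat -> dom M) l :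
  complete_theory ar T -> ~ nonempty_sym ar T R ->
  (forall g, T g -> sat rho g) -> size l = ar R -> ~ @Defs.rel _ M R l.
Proof.
case=> thT _ T_complete NR M_T size_l Rl.
case: (T_complete _ (sentence_ex_rel ar R)) => [/(nonempty_symE R thT) // | T_neg].
exact: (M_T _ T_neg (sat_ex_rel rho size_l Rl)).
Qed.

Lemma complete_theory_eq T1 T2 :
  complete_theory ar T1 -> is_theory ar T2 -> ~ T2 (Fal sym) ->
  (forall f, T1 f -> T2 f) -> theory_eq T1 T2.
Proof.
case=> [[T1_sent _] _ T1_complete] [T2_sent T2_closed] T2_consistent T12 f.
split=> [|T2f]; first exact: T12.
case: (T1_complete f (T2_sent f T2f)) => // /T12 T2_neg.
case: T2_consistent; apply: T2_closed => [|M rho M_T2]; first by split.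
exact: (M_T2 _ T2_neg (M_T2 _ T2f)).
Qed.

Lemma rename_theoryE s si T1 T2 f :
  cancel s si -> theory_eq (rename_theory s T2) T1 -> T1 (rename s f) <-> T2 f.
Proof.
move=> sK T12; split=> [/T12 [g [T2g E]] | T2f]; last by apply/T12; exists f.
by rewrite -(rename_cancel f sK) E rename_cancel.
Qed.

Lemma nonempty_sym_rename s si T1 T2 R :
  is_theory ar T1 -> is_theory ar T2 -> cancel s si -> (forall R, ar (s R) = ar R) ->
  theory_eq (rename_theory s T2) T1 ->
  nonempty_sym ar T1 (s R) <-> nonempty_sym ar T2 R.
Proof.
move=> thT1 thT2 sK ar_s T12.
by rewrite (nonempty_symE _ thT1) (nonempty_symE _ thT2) -rename_ex_rel //
  (rename_theoryE _ sK T12).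
Qed.

End Theories.

Section Restriction.
Variable sym : Type.
Implicit Types (P Q : sym -> Prop) (s : sym -> sym).

Definition restrict P s (R : sym) : sym :=
  if excluded_middle_informative (P R) then s R else R.

Lemma restrict_in P s R : P R -> restrict P s R = s R.
Proof. by rewrite /restrict; case: excluded_middle_informative. Qed.

Lemma restrict_out P s R : ~ P R -> restrict P s R = R.
Proof. by rewrite /restrict; case: excluded_middle_informative. Qed.

Lemma restrict_ext P Q s : (forall R, P R <-> Q R) -> restrict P s =1 restrict Q s.
Proof.
move=> PQ R; case: (excluded_middle_informative (P R)) => PR.
- by rewrite !restrict_in //; apply/PQ.
- by rewrite !restrict_out // => /PQ.
Qed.

Lemma restrict_bij P s si :
  cancel s si -> cancel si s -> (forall R, P (s R) <-> P R) -> bijective (restrict P s).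
Proof.
move=> sK siK P_s.
have P_si R : P (si R) <-> P R by rewrite -[in X in _ <-> X](siK R) P_s.
exists (restrict P si) => R; case: (excluded_middle_informative (P R)) => PR.
- by rewrite !restrict_in //; apply/P_s.
- by rewrite !restrict_out.
- by rewrite !restrict_in //; apply/P_si.
- by rewrite !restrict_out.
Qed.

Lemma restrict_comp P Q s :
  (forall R, Q R -> ~ P (s R)) ->
  restrict P s \o restrict Q s =1 restrict (fun R => P R \/ Q R) s.
Proof.
move=> QP R /=; case: (excluded_middle_informative (Q R)) => QR.
  by rewrite (restrict_in _ QR) (restrict_out _ (QP R QR)) restrict_in //; right.
rewrite (restrict_out _ QR); case: (excluded_middle_informative (P R)) => PR.
- by rewrite (restrict_in _ PR) restrict_in //; left.
- by rewrite (restrict_out _ PR) restrict_out // => -[].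
Qed.

End Restriction.

Section LUClosure.
Variables (sym : Type) (ar : sym -> nat) (T : theory_set sym) (s si : sym -> sym).
Hypotheses (T_complete : complete_theory ar T) (T_LU : LU_theory ar T).
Hypotheses (sK : cancel s si) (siK : cancel si s) (ar_s : forall R, ar (s R) = ar R).
Hypothesis nonempty_s : forall R, nonempty_sym ar T (s R) <-> nonempty_sym ar T R.

Let N := nonempty_sym ar T.

Lemma preserves_restrict_arity n : preserves (restrict (fun R => ar R = n /\ N R) s) T.
Proof.
pose P R := ar R = n /\ N R.
have P_s R : P (s R) <-> P R by rewrite /P ar_s /N nonempty_s.
apply: (@T_LU n _ (restrict_bij sK siK P_s)) => R PR.
  by rewrite restrict_in //; apply/P_s.
exact: restrict_out.
Qed.

Lemma rename_restrict_below k g :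
  T g -> T (rename (restrict (fun R => ar R < k /\ N R) s) g).
Proof.
elim: k g => [|k IH] g Tg.
  suff -> : rename (restrict (fun R => ar R < 0 /\ N R) s) g = g by [].
  by rewrite -[RHS]rename_id; apply: rename_ext => R; apply: restrict_out => -[].
have split_below : restrict (fun R => ar R < k.+1 /\ N R) s =1
    restrict (fun R => ar R = k /\ N R) s \o restrict (fun R => ar R < k /\ N R) s.
  move=> R; rewrite restrict_comp => [|{}R [lt_Rk _] [eq_sRk _]]; last first.
    by rewrite -eq_sRk ar_s ltnn in lt_Rk.
  by apply: restrict_ext => {}R; rewrite ltnS leq_eqVlt; case: eqP; intuition.
rewrite (rename_ext _ split_below) -rename_comp.
apply/(preserves_restrict_arity k).
by exists (rename (restrict (fun R => ar R < k /\ N R) s) g); split; [apply: IH|].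
Qed.

Lemma rename_closed g : T g -> T (rename s g).
Proof.
case: T_complete => thT _ _ Tg; have sg := proj1 thT g Tg.
apply/(theory_entails thT (rename_sentence ar_s sg)) => M rho M_T.
pose q := restrict (fun R => ar R < arity_bound ar g /\ N R) s.
have T_qg := rename_restrict_below (arity_bound ar g) Tg.
apply/(@sat_rename_congr _ _ _ q _ _ (proj1 sg)); last exact: M_T _ T_qg.
apply: all_syms_mono (all_syms_arity_bound ar g) => R lt_R l size_l.
case: (excluded_middle_informative (N R)) => NR; first by rewrite /q restrict_in.
have R_empty := complete_empty_rel T_complete NR M_T size_l.
have sR_empty : ~ @Defs.rel _ M (s R) l.
  by apply: (complete_empty_rel T_complete _ M_T); rewrite ?ar_s // /N nonempty_s.
by rewrite /q restrict_out => [|[]//]; tauto.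
Qed.

End LUClosure.

Lemma sqsubL_antisym (sym : Type) (ar : sym -> nat) (T1 T2 : theory_set sym) :
  complete_theory ar T1 -> complete_theory ar T2 -> LU_theory ar T2 ->
  language_similar ar T1 T2 -> sqsubL ar T1 T2 -> sqsubL ar T2 T1 ->
  theory_eq T1 T2.
Proof.
move=> T1_complete T2_complete T2_LU [s [[[si sK siK] ar_s] T12]] sub12 sub21.
have [[thT1 _ _] [thT2 T2_consistent _]] := (T1_complete, T2_complete).
have nonempty_s R : nonempty_sym ar T2 (s R) <-> nonempty_sym ar T2 R.
  rewrite -(nonempty_sym_rename R thT1 thT2 sK ar_s T12).
  by split; [apply: sub21 | apply: sub12].
apply: (complete_theory_eq T1_complete thT2 T2_consistent) => f /T12 [g [T2g ->]].
exact: (rename_closed T2_complete T2_LU sK siK ar_s nonempty_s).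
Qed.

Theorem proposition4p4 (sym : Type) (ar : sym -> nat)
    (S : theory_set sym -> Prop) :
  (forall T, S T -> complete_theory ar T /\ LU_theory ar T) ->
  (forall T0 T1, S T0 -> S T1 -> language_similar ar T0 T1) ->
  [/\ (forall T, S T -> sqsubL ar T T),
      (forall T1 T2 T3, S T1 -> S T2 -> S T3 ->
         sqsubL ar T1 T2 -> sqsubL ar T2 T3 -> sqsubL ar T1 T3)
    & (forall T1 T2, S T1 -> S T2 ->
         sqsubL ar T1 T2 -> sqsubL ar T2 T1 -> theory_eq T1 T2)].
Proof.
move=> S_complete_LU S_similar; split.
- by move=> T _ R.
- by move=> T1 T2 T3 _ _ _ sub12 sub23 R /sub12 /sub23.
move=> T1 T2 ST1 ST2; have [T1_complete _] := S_complete_LU T1 ST1.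
have [T2_complete T2_LU] := S_complete_LU T2 ST2.
exact: sqsubL_antisym (S_similar T1 T2 ST1 ST2).
Qed.
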